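(* Let the sequence $(y_k)_{k\in\mathbb{N}}$ be defined by $y_1=2$ and $(2k-1)^2y_k=4(k-1)^2y_{k-1}+2$ for $k\ge2$. Then $$\frac{\ln k}{2k}<y_k\le\frac{\ln k+4}{2k}\qquad\text{for all } k\in\mathbb{N}.$$ *)

From Stdlib Require Import Reals.

From Stdlib Require Import Reals Lra Lia Psatz.
Open Scope R_scope.

(* The two bounds are proved together by induction on k, in the slightly
   stronger form  ln k + 2 <= (2k - 1) y_k  and  2k y_k <= ln k + 4.  In the
   inductive step the recurrence is compared with these bounds at k + 1, and
   the increment d = ln (k+1) - ln k is controlled by 1 <= (k+1) d and
   k d <= 1, both instances of ln t <= t - 1. *)

Lemma mul_ln_sub_le (x y : R) : 0 < x -> 0 < y -> x * (ln y - ln x) <= y - x.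
Proof.
  intros hx hy.
  assert (hyx : 0 < y / x) by (apply Rdiv_lt_0_compat; lra).
  assert (ln_quot : ln y - ln x = ln (y / x)).
  { unfold Rdiv. rewrite ln_mult, ln_Rinv; try apply Rinv_0_lt_compat; lra. }
  pose proof (exp_ineq1_le (ln (y / x))) as hexp.
  rewrite exp_ln in hexp by exact hyx.
  rewrite ln_quot.
  replace (y - x) with (x * (y / x - 1)) by (field; lra).
  apply Rmult_le_compat_l; lra.
Qed.

Lemma ln_ge0 (x : R) : 1 <= x -> 0 <= ln x.
Proof.
  intros hx.
  pose proof (mul_ln_sub_le x 1 ltac:(lra) ltac:(lra)) as h.
  rewrite ln_1 in h. nra.
Qed.

Lemma ln_succ_sub_bounds (a : R) : 0 < a ->
  1 <= (a + 1) * (ln (a + 1) - ln a) /\ a * (ln (a + 1) - ln a) <= 1.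
Proof.
  intros ha. split.
  - pose proof (mul_ln_sub_le (a + 1) a ltac:(lra) ha). lra.
  - pose proof (mul_ln_sub_le a (a + 1) ha ltac:(lra)). lra.
Qed.

Section StepBounds.

Variables a w z : R.
Hypothesis a_ge1 : 1 <= a.
Hypothesis step : (2 * a + 1) ^ 2 * z = 4 * a ^ 2 * w + 2.

Lemma lower_bound_step : ln a + 2 <= (2 * a - 1) * w ->
  ln (a + 1) + 2 <= (2 * a + 1) * z.
Proof.
  intros hw.
  pose proof (ln_ge0 a a_ge1) as ln_a_ge0.
  destruct (ln_succ_sub_bounds a ltac:(lra)) as [incr_ge incr_le].
  set (d := ln (a + 1) - ln a) in *.
  assert (d_ge0 : 0 <= d) by nra.
  (* (4a^2 - 1) d <= 4a (a d) <= 4a, and ln a >= 0 absorbs the remaining 2. *)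
  assert (key : (4 * a ^ 2 - 1) * (ln (a + 1) + 2)
                <= 4 * a ^ 2 * (ln a + 2) + 2 * (2 * a - 1)).
  { replace (ln (a + 1)) with (ln a + d) by (unfold d; ring). nra. }
  apply (Rmult_le_reg_l ((2 * a - 1) * (2 * a + 1))); nra.
Qed.

Lemma upper_bound_step : 2 * a * w <= ln a + 4 ->
  2 * (a + 1) * z <= ln (a + 1) + 4.
Proof.
  intros hw.
  pose proof (ln_ge0 a a_ge1) as ln_a_ge0.
  destruct (ln_succ_sub_bounds a ltac:(lra)) as [incr_ge _].
  set (d := ln (a + 1) - ln a) in *.
  assert (hw' : 2 * (a + 1) * (4 * a ^ 2 * w + 2)
                <= 2 * (a + 1) * (2 * a * (ln a + 4) + 2)) by nra.
  (* (2a+1)^2 = 4a(a+1) + 1, and 4a (a+1) d >= 4a. *)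
  assert (key : 2 * (a + 1) * (4 * a ^ 2 * w + 2)
                <= (2 * a + 1) ^ 2 * (ln (a + 1) + 4)).
  { replace (ln (a + 1)) with (ln a + d) by (unfold d; ring). nra. }
  apply (Rmult_le_reg_l ((2 * a + 1) ^ 2)); nra.
Qed.

End StepBounds.

Section Recurrence.

Variable y : nat -> R.
Hypothesis y_1 : y 1%nat = 2.
Hypothesis y_rec : forall k : nat, (2 <= k)%nat ->
  (2 * INR k - 1) ^ 2 * y k = 4 * (INR k - 1) ^ 2 * y (k - 1)%nat + 2.

Lemma y_scaled_bounds (k : nat) : (1 <= k)%nat ->
  ln (INR k) + 2 <= (2 * INR k - 1) * y k /\ 2 * INR k * y k <= ln (INR k) + 4.
Proof.
  induction 1 as [|k hk [lo up]].
  - rewrite y_1. simpl INR. rewrite ln_1. lra.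
  - pose proof (y_rec (S k) ltac:(lia)) as hr.
    rewrite Nat.sub_succ, Nat.sub_0_r, S_INR in hr. rewrite S_INR.
    assert (ha : 1 <= INR k) by (apply (le_INR 1); exact hk).
    replace (2 * (INR k + 1) - 1) with (2 * INR k + 1) in * by ring.
    replace (INR k + 1 - 1) with (INR k) in hr by ring.
    split.
    + exact (lower_bound_step _ _ _ ha hr lo).
    + exact (upper_bound_step _ _ _ ha hr up).
Qed.

End Recurrence.

Theorem lemma4p4 (y : nat -> R)
  (h1 : y 1%nat = 2)
  (hrec : forall k : nat, (2 <= k)%nat ->
     (2 * INR k - 1)^2 * y k = 4 * (INR k - 1)^2 * y (k - 1)%nat + 2) :
  forall k : nat, (1 <= k)%nat ->
    ln (INR k) / (2 * INR k) < y k /\ y k <= (ln (INR k) + 4) / (2 * INR k).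
Proof.
  intros k hk.
  destruct (y_scaled_bounds y h1 hrec k hk) as [lo up].
  assert (hx : 1 <= INR k) by (apply (le_INR 1); exact hk).
  pose proof (ln_ge0 _ hx) as hln.
  assert (hinv : 0 < / (2 * INR k)) by (apply Rinv_0_lt_compat; lra).
  replace (y k) with (2 * INR k * y k / (2 * INR k)) by (field; lra).
  unfold Rdiv. split.
  - apply Rmult_lt_compat_r; [exact hinv | nra].
  - apply Rmult_le_compat_r; [lra | exact up].
Qed.
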